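(* Let $m,n$ be positive integers with $m$ even, and let $R$ be an $m\times n$ rectangular permutation matrix. If $R$ is not centrosymmetric, then there exist $m\times n$ centrosymmetric rectangular permutation matrices $Q_1\neq Q_2$ such that $R+R^\pi=Q_1+Q_2$.
   Context: A rectangular permutation matrix is an $m\times n$ $(0,1)$-matrix with exactly one $1$ in each row. For $A=(a_{i,j})\in M_{m,n}$, $A^\pi$ denotes the matrix with $(A^\pi)_{i,j}=a_{m+1-i,n+1-j}$; $A$ is centrosymmetric if $A=A^\pi$. *)

From mathcomp Require Import all_boot all_order all_algebra.
Set Implicit Arguments. Unset Strict Implicit. Unset Printing Implicit Defensive.
Import GRing.Theory Num.Theory.
Local Open Scope ring_scope.

(* A^pi : (A^pi)_{i,j} = a_{m+1-i, n+1-j}; with 0-based indices, rev_ord. *)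
Definition mxpi (m n : nat) (A : 'M[int]_(m, n)) : 'M[int]_(m, n) :=
  \matrix_(i < m, j < n) A (rev_ord i) (rev_ord j).

Definition centrosymmetric (m n : nat) (A : 'M[int]_(m, n)) : Prop :=
  A = mxpi A.

Definition rect_perm_mx (m n : nat) (A : 'M[int]_(m, n)) : Prop :=
  (forall i j, A i j = 0 \/ A i j = 1) /\
  (forall i : 'I_m, #|[set j : 'I_n | A i j == 1]| = 1%N).

From mathcomp Require Import all_boot all_order all_algebra.
From mathcomp Require Import zify.
Set Implicit Arguments.
Unset Strict Implicit.
Unset Printing Implicit Defensive.
Import GRing.Theory.
Local Open Scope ring_scope.

(* Since m is even, rev_ord exchanges the top half of the rows with the
   bottom half. So gluing the top half of R to the bottom half of R^pi
   gives a centrosymmetric matrix Q1, and symmetrically Q2 from R^pi and R.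
   Row by row, {Q1, Q2} = {R, R^pi}, so Q1 + Q2 = R + R^pi, both are
   rectangular permutation matrices, and Q1 = Q2 would force R = R^pi. *)

Lemma rev_ord_lt_half (m : nat) (i : 'I_m) :
  ~~ odd m -> (rev_ord i < m./2)%N = ~~ (i < m./2)%N.
Proof.
move=> even_m; have := odd_double_half m; rewrite (negbTE even_m) add0n -muln2.
have := ltn_ord i; rewrite /= -leqNgt; lia.
Qed.

Definition row_splice (T : Type) (m n h : nat) (A B : 'M[T]_(m, n)) :
  'M[T]_(m, n) :=
  \matrix_(i, j) if (i < h)%N then A i j else B i j.

Lemma row_splice_swap_eq (T : Type) (m n h : nat) (A B : 'M[T]_(m, n)) :
  row_splice h A B = row_splice h B A -> A = B.
Proof.
move/matrixP=> eq_splice; apply/matrixP=> i j.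
by have := eq_splice i j; rewrite !mxE; case: ifP.
Qed.

Lemma addmx_row_splice (V : nmodType) (m n h : nat) (A B : 'M[V]_(m, n)) :
  row_splice h A B + row_splice h B A = A + B.
Proof. by apply/matrixP=> i j; rewrite !mxE; case: ifP; rewrite // addrC. Qed.

Lemma mxpiK (m n : nat) : involutive (@mxpi m n).
Proof. by move=> A; apply/matrixP=> i j; rewrite !mxE !rev_ordK. Qed.

Lemma mxpi_row_splice (m n : nat) (A B : 'M[int]_(m, n)) : ~~ odd m ->
  mxpi (row_splice m./2 A B) = row_splice m./2 (mxpi B) (mxpi A).
Proof.
move=> even_m; apply/matrixP=> i j; rewrite !mxE rev_ord_lt_half //.
by case: (i < m./2)%N.
Qed.

Lemma centrosymmetric_row_splice (m n : nat) (A : 'M[int]_(m, n)) : ~~ odd m ->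
  centrosymmetric (row_splice m./2 A (mxpi A)).
Proof. by move=> even_m; rewrite /centrosymmetric mxpi_row_splice // mxpiK. Qed.

Lemma rect_perm_mx_mxpi (m n : nat) (A : 'M[int]_(m, n)) :
  rect_perm_mx A -> rect_perm_mx (mxpi A).
Proof.
case=> A01 A_row; split=> [i j | i]; first by rewrite mxE.
have -> : [set j | mxpi A i j == 1] = @rev_ord n @^-1: [set j | A (rev_ord i) j == 1].
  by apply/setP=> j; rewrite !inE mxE.
by rewrite card_preimset //; apply: rev_ord_inj.
Qed.

Lemma rect_perm_mx_row_splice (m n h : nat) (A B : 'M[int]_(m, n)) :
  rect_perm_mx A -> rect_perm_mx B -> rect_perm_mx (row_splice h A B).
Proof.
case=> A01 A_row [B01 B_row]; split=> [i j | i]; rewrite /row_splice.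
  by rewrite mxE; case: ifP.
under eq_finset => j do rewrite mxE.
by case: (i < h)%N.
Qed.

Theorem mainTheorem2 (m n : nat) (R : 'M[int]_(m, n)) :
  (0 < m)%N -> (0 < n)%N -> ~~ odd m ->
  rect_perm_mx R -> ~ centrosymmetric R ->
  exists Q1 Q2 : 'M[int]_(m, n),
    rect_perm_mx Q1 /\ rect_perm_mx Q2 /\
    centrosymmetric Q1 /\ centrosymmetric Q2 /\
    Q1 <> Q2 /\ R + mxpi R = Q1 + Q2.
Proof.
move=> _ _ even_m permR not_centroR.
have permRpi := rect_perm_mx_mxpi permR.
exists (row_splice m./2 R (mxpi R)), (row_splice m./2 (mxpi R) R).
split; first exact: rect_perm_mx_row_splice.
split; first exact: rect_perm_mx_row_splice.
split; first exact: centrosymmetric_row_splice.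
split; first by rewrite -{2}(mxpiK R); apply: centrosymmetric_row_splice.
split; first by move/row_splice_swap_eq.
by rewrite addmx_row_splice.
Qed.
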